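(* Let $\gamma:[0,l]\times[0,w)\to E_1^4$, $(s,t)\mapsto\gamma(s,t)$, be a smooth inextensible one-parameter family of partially null curves in $E_1^4$ parametrized by arclength ($\|\partial\gamma/\partial s\|\equiv1$), with Frenet frame $\{T,N,B_1,B_2\}$, curvatures $k_1,k_2$ (and $k_3\equiv0$), and write $$\frac{\partial\gamma}{\partial t}=\beta_1T+\beta_2N+\beta_3B_1+\beta_4B_2$$ with smooth scalar functions $\beta_i$. Put $\psi_1=\langle\frac{\partial N}{\partial t},B_1\rangle$ and $\psi_3=\langle\frac{\partial B_1}{\partial t},B_2\rangle$. Then, at points where $\frac{\partial\beta_4}{\partial s}\neq0$, $$k_1=-\frac{\partial\psi_1/\partial s}{\partial\beta_4/\partial s},$$ and at points where $\psi_1\neq0$, $$k_2=\frac{1}{\psi_1}\frac{\partial\psi_3}{\partial s}.$$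
   Context: $E_1^4$ is $\mathbb{R}^4$ with the Lorentzian metric $\langle x,y\rangle=-x_1y_1+x_2y_2+x_3y_3+x_4y_4$ and $\|x\|=\sqrt{|\langle x,x\rangle|}$. A partially null curve is a spacelike curve whose first binormal is a null vector. For such a curve parametrized by arclength $s$, its Frenet frame $\{T,N,B_1,B_2\}$ ($T=\partial\gamma/\partial s$) satisfies $\langle T,T\rangle=\langle N,N\rangle=1$, $\langle B_1,B_1\rangle=\langle B_2,B_2\rangle=0$, $\langle B_1,B_2\rangle=1$, all other inner products zero, and the Frenet equations $T'=k_1N$, $N'=-k_1T+k_2B_1$, $B_1'=k_3B_1$, $B_2'=-k_2N-k_3B_2$, with $k_3\equiv0$. In the family, each $s\mapsto\gamma(s,t)$ is such a curve and frame and curvatures are smooth in $(s,t)$. The flow is inextensible if $\frac{\partial}{\partial t}\|\partial\gamma/\partial u\|=0$. *)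

From Stdlib Require Import Reals.
From Coquelicot Require Import Coquelicot.
Open Scope R_scope.

Record V4 := mkV { c1 : R; c2 : R; c3 : R; c4 : R }.

Definition vadd (x y : V4) : V4 :=
  mkV (c1 x + c1 y) (c2 x + c2 y) (c3 x + c3 y) (c4 x + c4 y).
Definition vscal (a : R) (x : V4) : V4 :=
  mkV (a * c1 x) (a * c2 x) (a * c3 x) (a * c4 x).

Definition linner (x y : V4) : R :=
  - c1 x * c1 y + c2 x * c2 y + c3 x * c3 y + c4 x * c4 y.
Definition lnorm (x : V4) : R := sqrt (Rabs (linner x x)).

Definition ds (f : R -> R -> R) (s t : R) : R := Derive (fun x => f x t) s.
Definition dt (f : R -> R -> R) (s t : R) : R := Derive (fun y => f s y) t.

Definition ds_v (X : R -> R -> V4) (s t : R) : V4 :=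
  mkV (ds (fun a b => c1 (X a b)) s t) (ds (fun a b => c2 (X a b)) s t)
      (ds (fun a b => c3 (X a b)) s t) (ds (fun a b => c4 (X a b)) s t).
Definition dt_v (X : R -> R -> V4) (s t : R) : V4 :=
  mkV (dt (fun a b => c1 (X a b)) s t) (dt (fun a b => c2 (X a b)) s t)
      (dt (fun a b => c3 (X a b)) s t) (dt (fun a b => c4 (X a b)) s t).

Fixpoint Cn_on (n : nat) (U : R * R -> Prop) (f : R -> R -> R) : Prop :=
  match n with
  | O => forall s t, U (s, t) -> continuous (fun p : R * R => f (fst p) (snd p)) (s, t)
  | S m =>
      (forall s t, U (s, t) -> continuous (fun p : R * R => f (fst p) (snd p)) (s, t)) /\
      (forall s t, U (s, t) -> ex_derive (fun x => f x t) s /\ ex_derive (fun y => f s y) t) /\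
      Cn_on m U (ds f) /\ Cn_on m U (dt f)
  end.

Definition smooth_on (U : R * R -> Prop) (f : R -> R -> R) : Prop :=
  forall n, Cn_on n U f.

Definition smooth_on_v (U : R * R -> Prop) (X : R -> R -> V4) : Prop :=
  smooth_on U (fun s t => c1 (X s t)) /\ smooth_on U (fun s t => c2 (X s t)) /\
  smooth_on U (fun s t => c3 (X s t)) /\ smooth_on U (fun s t => c4 (X s t)).

Definition in_dom (l w s t : R) : Prop := 0 <= s <= l /\ 0 <= t < w.

Definition pn_frame (T N B1 B2 : V4) : Prop :=
  linner T T = 1 /\ linner N N = 1 /\ linner B1 B1 = 0 /\ linner B2 B2 = 0 /\
  linner B1 B2 = 1 /\
  linner T N = 0 /\ linner T B1 = 0 /\ linner T B2 = 0 /\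
  linner N B1 = 0 /\ linner N B2 = 0.

(* Every identity needed comes from differentiating in [t] an inner product of
   frame vectors that the frame relations or Frenet equations make constant in [t],
   together with Schwarz's theorem to exchange [d/ds] and [d/dt].  Since
   [<d gamma/dt, B1> = b4] and [<d gamma/ds, B1> = 0], one gets
   [<T, dB1/dt> = - db4/ds]; then
   [dpsi1/ds = <d/dt (dN/ds), B1> = - <dN/ds, dB1/dt> = k1 <T, dB1/dt>]
   (using [<B1, dB1/dt> = 0]), and
   [dpsi3/ds = <d/dt (dB1/ds), B2> - k2 <dB1/dt, N> = k2 <B1, dN/dt> = k2 psi1].
   The domain is closed at [s = 0, l] and [t = 0], so the identities hold only on
   one-sided neighbourhoods, which still determine derivatives. *)

From Pilot Require Import Defs.
From Stdlib Require Import Reals Lra.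
From Coquelicot Require Import Coquelicot.
Import Defs.
Open Scope R_scope.

Lemma linner_sym X Y : linner X Y = linner Y X.
Proof. unfold linner; ring. Qed.

Lemma linner_vadd_l X Y Z : linner (vadd X Y) Z = linner X Z + linner Y Z.
Proof. unfold linner, vadd; simpl; ring. Qed.

Lemma linner_vadd_r X Y Z : linner Z (vadd X Y) = linner Z X + linner Z Y.
Proof. unfold linner, vadd; simpl; ring. Qed.

Lemma linner_vscal_l a X Z : linner (vscal a X) Z = a * linner X Z.
Proof. unfold linner, vscal; simpl; ring. Qed.

Lemma linner_vscal_r a X Z : linner Z (vscal a X) = a * linner Z X.
Proof. unfold linner, vscal; simpl; ring. Qed.

Definition vderive (X : R -> V4) (x : R) : V4 :=
  mkV (Derive (fun y => c1 (X y)) x) (Derive (fun y => c2 (X y)) x)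
      (Derive (fun y => c3 (X y)) x) (Derive (fun y => c4 (X y)) x).

Definition ex_vderive (X : R -> V4) (x : R) : Prop :=
  ex_derive (fun y => c1 (X y)) x /\ ex_derive (fun y => c2 (X y)) x /\
  ex_derive (fun y => c3 (X y)) x /\ ex_derive (fun y => c4 (X y)) x.

Lemma is_derive_linner X Y x : ex_vderive X x -> ex_vderive Y x ->
  is_derive (fun y => linner (X y) (Y y)) x
    (linner (vderive X x) (Y x) + linner (X x) (vderive Y x)).
Proof.
unfold ex_vderive, linner, vderive; simpl.
(* [auto_derive] only recognises function symbols that are local variables *)
set (x1 := fun y => c1 (X y)); set (x2 := fun y => c2 (X y));
set (x3 := fun y => c3 (X y)); set (x4 := fun y => c4 (X y));
set (y1 := fun y => c1 (Y y)); set (y2 := fun y => c2 (Y y));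
set (y3 := fun y => c3 (Y y)); set (y4 := fun y => c4 (Y y)).
intros (?&?&?&?) (?&?&?&?).
match goal with |- is_derive _ _ ?l => change (is_derive
  (fun y => - x1 y * y1 y + x2 y * y2 y + x3 y * y3 y + x4 y * y4 y) x l) end.
auto_derive; [tauto |].
unfold x1, x2, x3, x4, y1, y2, y3, y4; cbv beta; ring.
Qed.

(* [e < 0] gives a left neighbourhood; this covers the endpoints of [0, l] x [0, w). *)
Definition one_sided_nbhd (P : R -> Prop) (x : R) : Prop :=
  exists e, e <> 0 /\ forall u, 0 <= u < 1 -> P (x + u * e).

Lemma one_sided_nbhd_Icc (P : R -> Prop) a b x : a < b -> a <= x <= b ->
  (forall y, a <= y <= b -> P y) -> one_sided_nbhd P x.
Proof.
intros Hab Hx HP; destruct (Rlt_or_le x b) as [Hxb | Hxb].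
- exists (b - x); split; [lra |]; intros u Hu; apply HP; nra.
- exists (a - b); split; [lra |]; intros u Hu; apply HP; nra.
Qed.

Lemma one_sided_nbhd_Ico (P : R -> Prop) a b x : a <= x < b ->
  (forall y, a <= y < b -> P y) -> one_sided_nbhd P x.
Proof. intros Hx HP; exists (b - x); split; [lra |]; intros u Hu; apply HP; nra. Qed.

Lemma Derive_one_sided_zero P f x : one_sided_nbhd P x ->
  (forall y, P y -> f y = 0) -> ex_derive f x -> Derive f x = 0.
Proof.
intros [e [He HP]] Hf [d Hd].
rewrite (is_derive_unique _ _ _ Hd).
apply is_derive_Reals in Hd.
destruct (Req_dec d 0) as [Hd0 | Hd0]; [exact Hd0 | exfalso].
assert (Hpos : 0 < Rabs d / 2) by (apply Rabs_pos_lt in Hd0; lra).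
destruct (Hd _ Hpos) as [delta Hdelta].
assert (Hdel := cond_pos delta).
assert (He' : 0 < Rabs e) by (apply Rabs_pos_lt; exact He).
(* a difference quotient with both values zero, at a step shorter than [delta] *)
set (u := Rmin (delta / (2 * Rabs e)) (1 / 2)).
assert (Hu : 0 < u <= 1 / 2).
{ split; [apply Rmin_glb_lt; [apply Rdiv_lt_0_compat |]; lra | apply Rmin_r]. }
assert (Hue : u * Rabs e < delta).
{ assert (u <= delta / (2 * Rabs e)) by apply Rmin_l.
  apply Rle_lt_trans with (delta / (2 * Rabs e) * Rabs e);
    [apply Rmult_le_compat_r; lra | field_simplify; lra]. }
assert (Hh : u * e <> 0) by (apply Rmult_integral_contrapositive; split; lra).
specialize (Hdelta (u * e) Hh).
rewrite Rabs_mult, (Rabs_pos_eq u) in Hdelta by lra.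
specialize (Hdelta Hue).
rewrite (Hf (x + u * e)) in Hdelta by (apply HP; lra).
rewrite (Hf x) in Hdelta by (replace x with (x + 0 * e) by ring; apply HP; lra).
replace ((0 - 0) / (u * e) - d) with (- d) in Hdelta by (field; split; lra).
rewrite Rabs_Ropp in Hdelta; lra.
Qed.

Lemma Derive_one_sided_ext P f g x : one_sided_nbhd P x ->
  (forall y, P y -> f y = g y) -> ex_derive f x -> ex_derive g x ->
  Derive f x = Derive g x.
Proof.
intros HP Hfg Hf Hg; apply Rminus_diag_uniq.
rewrite <- Derive_minus by assumption.
apply (Derive_one_sided_zero P); [exact HP | | auto_derive; tauto].
intros y Hy; rewrite Hfg by exact Hy; ring.
Qed.

Lemma smooth_on_ex_ds U f s t : smooth_on U f -> U (s, t) -> ex_derive (fun a => f a t) s.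
Proof. intros Hf HU; destruct (Hf 1%nat) as (_ & Hex & _); exact (proj1 (Hex s t HU)). Qed.

Lemma smooth_on_ex_dt U f s t : smooth_on U f -> U (s, t) -> ex_derive (fun b => f s b) t.
Proof. intros Hf HU; destruct (Hf 1%nat) as (_ & Hex & _); exact (proj2 (Hex s t HU)). Qed.

Lemma smooth_on_ds U f : smooth_on U f -> smooth_on U (ds f).
Proof. intros Hf n; destruct (Hf (S n)) as (_ & _ & Hds & _); exact Hds. Qed.

Lemma smooth_on_dt U f : smooth_on U f -> smooth_on U (dt f).
Proof. intros Hf n; destruct (Hf (S n)) as (_ & _ & _ & Hdt); exact Hdt. Qed.

Lemma ds_dt_comm U f s t : open U -> smooth_on U f -> U (s, t) ->
  ds (dt f) s t = dt (ds f) s t.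
Proof.
intros HO Hf HU.
destruct (Hf 2%nat) as (_ & Hex & (_ & Hex_s & _ & Hcont_ts) & (_ & Hex_t & Hcont_st & _)).
assert (Hloc : locally_2d (fun u v => U (u, v)) s t).
{ apply locally_2d_locally, (locally_open U); [exact HO | | exact HU].
  intros [a b]; exact (fun H => H). }
apply Schwarz.
- destruct Hloc as [delta Hdelta]; exists delta; intros u v Hu Hv.
  specialize (Hdelta u v Hu Hv).
  destruct (Hex u v Hdelta) as [Hfs Hft].
  exact (conj Hfs (conj Hft (conj (proj1 (Hex_t u v Hdelta)) (proj2 (Hex_s u v Hdelta))))).
- apply continuity_2d_pt_filterlim, Hcont_st, HU.
- apply continuity_2d_pt_filterlim, Hcont_ts, HU.
Qed.

Lemma smooth_on_v_ex_ds U X s t : smooth_on_v U X -> U (s, t) ->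
  ex_vderive (fun a => X a t) s.
Proof.
intros (H1 & H2 & H3 & H4) HU.
exact (conj (smooth_on_ex_ds _ _ _ _ H1 HU) (conj (smooth_on_ex_ds _ _ _ _ H2 HU)
  (conj (smooth_on_ex_ds _ _ _ _ H3 HU) (smooth_on_ex_ds _ _ _ _ H4 HU)))).
Qed.

Lemma smooth_on_v_ex_dt U X s t : smooth_on_v U X -> U (s, t) ->
  ex_vderive (fun b => X s b) t.
Proof.
intros (H1 & H2 & H3 & H4) HU.
exact (conj (smooth_on_ex_dt _ _ _ _ H1 HU) (conj (smooth_on_ex_dt _ _ _ _ H2 HU)
  (conj (smooth_on_ex_dt _ _ _ _ H3 HU) (smooth_on_ex_dt _ _ _ _ H4 HU)))).
Qed.

Lemma smooth_on_v_ds U X : smooth_on_v U X -> smooth_on_v U (ds_v X).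
Proof. intros (?&?&?&?); repeat split; apply smooth_on_ds; assumption. Qed.

Lemma smooth_on_v_dt U X : smooth_on_v U X -> smooth_on_v U (dt_v X).
Proof. intros (?&?&?&?); repeat split; apply smooth_on_dt; assumption. Qed.

Lemma ds_dt_v_comm U X s t : open U -> smooth_on_v U X -> U (s, t) ->
  ds_v (dt_v X) s t = dt_v (ds_v X) s t.
Proof.
intros HO (?&?&?&?) HU; unfold ds_v, dt_v; f_equal; apply (ds_dt_comm U); assumption.
Qed.

Lemma ds_linner U X Y s t : smooth_on_v U X -> smooth_on_v U Y -> U (s, t) ->
  ds (fun a b => linner (X a b) (Y a b)) s t =
  linner (ds_v X s t) (Y s t) + linner (X s t) (ds_v Y s t).
Proof.
intros HX HY HU; apply is_derive_unique, is_derive_linner;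
  eapply smooth_on_v_ex_ds; eassumption.
Qed.

Lemma dt_linner U X Y s t : smooth_on_v U X -> smooth_on_v U Y -> U (s, t) ->
  dt (fun a b => linner (X a b) (Y a b)) s t =
  linner (dt_v X s t) (Y s t) + linner (X s t) (dt_v Y s t).
Proof.
intros HX HY HU; apply is_derive_unique, is_derive_linner;
  eapply smooth_on_v_ex_dt; eassumption.
Qed.

Section PartiallyNullVariation.

Variables (U : R * R -> Prop) (D : R -> R -> Prop).
Variables (gam T N B1 B2 : R -> R -> V4) (k1 k2 b1 b2 b3 b4 : R -> R -> R).

Hypothesis U_open : open U.
Hypothesis D_sub_U : forall s t, D s t -> U (s, t).
Hypotheses (gam_smooth : smooth_on_v U gam) (N_smooth : smooth_on_v U N)
  (B1_smooth : smooth_on_v U B1) (B2_smooth : smooth_on_v U B2)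
  (b4_smooth : smooth_on U b4).

Hypothesis tangent : forall s t, D s t -> T s t = ds_v gam s t.
Hypothesis frame : forall s t, D s t -> pn_frame (T s t) (N s t) (B1 s t) (B2 s t).
Hypothesis frenet_N : forall s t, D s t ->
  ds_v N s t = vadd (vscal (- k1 s t) (T s t)) (vscal (k2 s t) (B1 s t)).
Hypothesis frenet_B1 : forall s t, D s t -> ds_v B1 s t = vscal 0 (B1 s t).
Hypothesis frenet_B2 : forall s t, D s t ->
  ds_v B2 s t = vadd (vscal (- k2 s t) (N s t)) (vscal (- 0) (B2 s t)).
Hypothesis variation : forall s t, D s t ->
  dt_v gam s t =
  vadd (vadd (vscal (b1 s t) (T s t)) (vscal (b2 s t) (N s t)))
       (vadd (vscal (b3 s t) (B1 s t)) (vscal (b4 s t) (B2 s t))).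

Variables s t : R.
Hypothesis Dst : D s t.
Hypothesis side_s : one_sided_nbhd (fun a => D a t) s.
Hypothesis side_t : one_sided_nbhd (fun b => D s b) t.

Let Ust : U (s, t) := D_sub_U s t Dst.

Lemma dt_linner_const X Y c : smooth_on_v U X -> smooth_on_v U Y ->
  (forall b, D s b -> linner (X s b) (Y s b) = c) ->
  linner (dt_v X s t) (Y s t) + linner (X s t) (dt_v Y s t) = 0.
Proof.
intros HX HY Hc; rewrite <- (dt_linner U) by assumption; unfold dt.
rewrite (Derive_one_sided_ext _ _ (fun _ => c) _ side_t Hc).
- apply Derive_const.
- eexists; apply is_derive_linner; eapply smooth_on_v_ex_dt; eassumption.
- apply ex_derive_const.
Qed.

Lemma ds_linner_eq X Y f : smooth_on_v U X -> smooth_on_v U Y -> smooth_on U f ->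
  (forall a, D a t -> linner (X a t) (Y a t) = f a t) ->
  linner (ds_v X s t) (Y s t) + linner (X s t) (ds_v Y s t) = ds f s t.
Proof.
intros HX HY Hf Hxy; rewrite <- (ds_linner U) by assumption; unfold ds.
apply (Derive_one_sided_ext _ _ _ _ side_s Hxy).
- eexists; apply is_derive_linner; eapply smooth_on_v_ex_ds; eassumption.
- eapply smooth_on_ex_ds; eassumption.
Qed.

Lemma linner_dt_B1_B1 : linner (dt_v B1 s t) (B1 s t) = 0.
Proof.
assert (H : linner (dt_v B1 s t) (B1 s t) + linner (B1 s t) (dt_v B1 s t) = 0).
{ apply (dt_linner_const _ _ 0 B1_smooth B1_smooth).
  intros b Hb; now destruct (frame s b Hb) as (_ & _ & ? & _). }
rewrite (linner_sym (B1 s t)) in H; lra.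
Qed.

Lemma linner_dt_B1_N : linner (dt_v B1 s t) (N s t) = - linner (B1 s t) (dt_v N s t).
Proof.
assert (H : linner (dt_v B1 s t) (N s t) + linner (B1 s t) (dt_v N s t) = 0).
{ apply (dt_linner_const _ _ 0 B1_smooth N_smooth).
  intros b Hb; rewrite linner_sym; now destruct (frame s b Hb) as (_&_&_&_&_&_&_&_&?&_). }
lra.
Qed.

(* [<d gamma/dt, B1> = b4] because [B1] is null and [<B1, B2> = 1]. *)
Lemma linner_ds_dt_gam_B1 : linner (ds_v (dt_v gam) s t) (B1 s t) = ds b4 s t.
Proof.
rewrite <- (ds_linner_eq _ _ _ (smooth_on_v_dt _ _ gam_smooth) B1_smooth b4_smooth).
- rewrite (frenet_B1 s t Dst), linner_vscal_r; ring.
- intros a Ha; rewrite (variation a t Ha).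
  destruct (frame a t Ha) as (_ & _ & B1B1 & _ & B1B2 & _ & TB1 & _ & NB1 & _).
  rewrite !linner_vadd_l, !linner_vscal_l, TB1, NB1, B1B1, linner_sym, B1B2; ring.
Qed.

Lemma linner_T_dt_B1 : linner (T s t) (dt_v B1 s t) = - ds b4 s t.
Proof.
assert (H : linner (dt_v (ds_v gam) s t) (B1 s t) + linner (ds_v gam s t) (dt_v B1 s t) = 0).
{ apply (dt_linner_const _ _ 0 (smooth_on_v_ds _ _ gam_smooth) B1_smooth).
  intros b Hb; rewrite <- (tangent s b Hb).
  now destruct (frame s b Hb) as (_&_&_&_&_&_&?&_). }
rewrite <- (ds_dt_v_comm U) in H by assumption.
rewrite linner_ds_dt_gam_B1, <- (tangent s t Dst) in H; lra.
Qed.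

Lemma ds_linner_dt_N_B1 :
  ds (fun a b => linner (dt_v N a b) (B1 a b)) s t = - k1 s t * ds b4 s t.
Proof.
rewrite (ds_linner U) by first [assumption | apply smooth_on_v_dt; assumption].
rewrite (frenet_B1 s t Dst), linner_vscal_r, (ds_dt_v_comm U) by assumption.
assert (H : linner (dt_v (ds_v N) s t) (B1 s t) + linner (ds_v N s t) (dt_v B1 s t) = 0).
{ apply (dt_linner_const _ _ 0 (smooth_on_v_ds _ _ N_smooth) B1_smooth).
  intros b Hb; rewrite (frenet_N s b Hb).
  destruct (frame s b Hb) as (_ & _ & B1B1 & _ & _ & _ & TB1 & _).
  rewrite linner_vadd_l, !linner_vscal_l, TB1, B1B1; ring. }
rewrite (frenet_N s t Dst), linner_vadd_l, !linner_vscal_l, linner_T_dt_B1,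
  (linner_sym (B1 s t)), linner_dt_B1_B1 in H.
lra.
Qed.

Lemma ds_linner_dt_B1_B2 :
  ds (fun a b => linner (dt_v B1 a b) (B2 a b)) s t =
  k2 s t * linner (dt_v N s t) (B1 s t).
Proof.
rewrite (ds_linner U) by first [assumption | apply smooth_on_v_dt; assumption].
rewrite (frenet_B2 s t Dst), (ds_dt_v_comm U) by assumption.
assert (H : linner (dt_v (ds_v B1) s t) (B2 s t) + linner (ds_v B1 s t) (dt_v B2 s t) = 0).
{ apply (dt_linner_const _ _ 0 (smooth_on_v_ds _ _ B1_smooth) B2_smooth).
  intros b Hb; rewrite (frenet_B1 s b Hb), linner_vscal_l; ring. }
rewrite (frenet_B1 s t Dst), linner_vscal_l in H.
rewrite linner_vadd_r, !linner_vscal_r, linner_dt_B1_N, (linner_sym (B1 s t)).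
lra.
Qed.

End PartiallyNullVariation.

Theorem theorem3p8
  (l w : R) (U : R * R -> Prop)
  (gam T N B1 B2 : R -> R -> V4)
  (k1 k2 b1 b2 b3 b4 : R -> R -> R) :
  0 < l -> 0 < w ->
  open U ->
  (forall s t, in_dom l w s t -> U (s, t)) ->
  smooth_on_v U gam -> smooth_on_v U T -> smooth_on_v U N ->
  smooth_on_v U B1 -> smooth_on_v U B2 ->
  smooth_on U k1 -> smooth_on U k2 ->
  smooth_on U b1 -> smooth_on U b2 -> smooth_on U b3 -> smooth_on U b4 ->
  (forall s t, in_dom l w s t ->
     lnorm (ds_v gam s t) = 1 /\
     T s t = ds_v gam s t /\
     pn_frame (T s t) (N s t) (B1 s t) (B2 s t) /\
     ds_v T s t = vscal (k1 s t) (N s t) /\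
     ds_v N s t = vadd (vscal (- k1 s t) (T s t)) (vscal (k2 s t) (B1 s t)) /\
     ds_v B1 s t = vscal 0 (B1 s t) /\
     ds_v B2 s t = vadd (vscal (- k2 s t) (N s t)) (vscal (- 0) (B2 s t)) /\
     dt (fun a b => lnorm (ds_v gam a b)) s t = 0 /\
     dt_v gam s t =
       vadd (vadd (vscal (b1 s t) (T s t)) (vscal (b2 s t) (N s t)))
            (vadd (vscal (b3 s t) (B1 s t)) (vscal (b4 s t) (B2 s t)))) ->
  forall s t, in_dom l w s t ->
    (ds b4 s t <> 0 ->
       k1 s t = - ds (fun a b => linner (dt_v N a b) (B1 a b)) s t / ds b4 s t) /\
    (linner (dt_v N s t) (B1 s t) <> 0 ->
       k2 s t = / linner (dt_v N s t) (B1 s t) *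
                ds (fun a b => linner (dt_v B1 a b) (B2 a b)) s t).
Proof.
intros Hl Hw HO HD Hgam _ HN HB1 HB2 _ _ _ _ _ Hb4 HF s t Hst.
assert (tangent : forall a b, in_dom l w a b -> T a b = ds_v gam a b)
  by (intros a b H; now destruct (HF a b H) as (_ & ? & _)).
assert (frame : forall a b, in_dom l w a b -> pn_frame (T a b) (N a b) (B1 a b) (B2 a b))
  by (intros a b H; now destruct (HF a b H) as (_ & _ & ? & _)).
assert (frenet_N : forall a b, in_dom l w a b ->
  ds_v N a b = vadd (vscal (- k1 a b) (T a b)) (vscal (k2 a b) (B1 a b)))
  by (intros a b H; now destruct (HF a b H) as (_ & _ & _ & _ & ? & _)).
assert (frenet_B1 : forall a b, in_dom l w a b -> ds_v B1 a b = vscal 0 (B1 a b))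
  by (intros a b H; now destruct (HF a b H) as (_ & _ & _ & _ & _ & ? & _)).
assert (frenet_B2 : forall a b, in_dom l w a b ->
  ds_v B2 a b = vadd (vscal (- k2 a b) (N a b)) (vscal (- 0) (B2 a b)))
  by (intros a b H; now destruct (HF a b H) as (_ & _ & _ & _ & _ & _ & ? & _)).
assert (variation : forall a b, in_dom l w a b ->
  dt_v gam a b =
  vadd (vadd (vscal (b1 a b) (T a b)) (vscal (b2 a b) (N a b)))
       (vadd (vscal (b3 a b) (B1 a b)) (vscal (b4 a b) (B2 a b))))
  by (intros a b H; now destruct (HF a b H) as (_ & _ & _ & _ & _ & _ & _ & _ & ?)).
assert (side_s : one_sided_nbhd (fun a => in_dom l w a t) s).
{ apply (one_sided_nbhd_Icc _ 0 l); [lra | exact (proj1 Hst) |].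
  intros y Hy; exact (conj Hy (proj2 Hst)). }
assert (side_t : one_sided_nbhd (fun b => in_dom l w s b) t).
{ apply (one_sided_nbhd_Ico _ 0 w); [exact (proj2 Hst) |].
  intros y Hy; exact (conj (proj1 Hst) Hy). }
split; intro Hnz.
- rewrite (ds_linner_dt_N_B1 U (in_dom l w) gam T N B1 B2 k1 k2 b1 b2 b3 b4)
    by assumption.
  field; exact Hnz.
- rewrite (ds_linner_dt_B1_B2 U (in_dom l w) T N B1 B2 k2) by assumption.
  field; exact Hnz.
Qed.
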